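(* Let $\mathcal H$ and $\mathcal K$ be Hilbert spaces. If $D$ is an nc-domain and $f$ is an $\mathcal L(\mathcal H,\mathcal K)$-valued nc-function on $D$, then there exists a unique $\mathcal L(\mathcal H,\mathcal K)$-valued nc-function $f^\sim$ on the envelope $D^\sim$ such that $f^\sim|_D=f$.
   Context: $\mathcal M^d=\bigcup_n\mathcal M_n^d$. An nc-set is a subset of $\mathcal M^d$ closed under direct sums and unitary conjugation; an nc-domain is an nc-set with each level $D\cap\mathcal M_n^d$ open. A set $A$ is invariant if $S^{-1}(A\cap\mathcal M_n^d)S\subseteq A$ for every $n$ and every invertible $S\in\mathcal M_n$. The envelope $A^\sim$ of $A$ is the smallest invariant nc-set containing $A$. An $\mathcal L(\mathcal H,\mathcal K)$-valued nc-function on a set $D$ closed under direct sums is a map $f$ with $f(x)\in\mathcal L(\mathbb C^n\otimes\mathcal H,\mathbb C^n\otimes\mathcal K)$ for $x\in D\cap\mathcal M_n^d$, $f(x\oplus y)=f(x)\oplus f(y)$, and $f(s^{-1}xs)=(s^{-1}\otimes I_{\mathcal K})f(x)(s\otimes I_{\mathcal H})$ whenever $s$ is invertible and $x,s^{-1}xs\in D$. *)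

From HB Require Import structures.
From mathcomp Require Import all_boot all_order all_algebra.
From mathcomp Require Import complex.
From mathcomp Require Import reals.
Set Implicit Arguments. Unset Strict Implicit. Unset Printing Implicit Defensive.
Import Order.TTheory GRing.Theory Num.Theory.
Local Open Scope ring_scope.
Local Open Scope complex_scope.

Section NC.
Variable R : realType.
Local Notation C := (R[i]).

Definition ncpt (d n : nat) := 'I_d -> 'M[C]_n.

(* A subset of M^d = union_n M_n^d, given level by level. *)
Definition ncsubset (d : nat) := forall n : nat, ncpt d n -> Prop.

Definition dsum_pt d n m (x : ncpt d n) (y : ncpt d m) : ncpt d (n + m) :=
  fun k => block_mx (x k) 0 0 (y k).

Definition adjmx n (U : 'M[C]_n) : 'M[C]_n := (map_mx (fun z => z^*) U)^T.

Definition unitary n (U : 'M[C]_n) : Prop :=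
  U *m adjmx U = 1%:M /\ adjmx U *m U = 1%:M.

Definition simpt d n (s : 'M[C]_n) (x : ncpt d n) : ncpt d n :=
  fun k => invmx s *m x k *m s.

Definition closed_dsum d (A : ncsubset d) : Prop :=
  forall n m (x : ncpt d n) (y : ncpt d m), A n x -> A m y -> A (n + m)%N (dsum_pt x y).

Definition is_ncset d (A : ncsubset d) : Prop :=
  closed_dsum A /\
  forall n (U : 'M[C]_n) (x : ncpt d n), unitary U -> A n x ->
    A n (fun k => adjmx U *m x k *m U).

(* each level D cap M_n^d is open in M_n^d ~ C^(d n^2) (product topology,
   expressed with the max-modulus metric) *)
Definition level_open d (A : ncsubset d) : Prop :=
  forall n (x : ncpt d n), A n x ->
    exists eps : R, 0 < eps /\
      forall y : ncpt d n,
        (forall k i j, `|y k i j - x k i j| < eps%:C) -> A n y.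

Definition is_ncdomain d (A : ncsubset d) : Prop := is_ncset A /\ level_open A.

Definition invariant d (A : ncsubset d) : Prop :=
  forall n (S : 'M[C]_n) (x : ncpt d n), S \in unitmx -> A n x -> A n (simpt S x).

Definition envelope d (A : ncsubset d) : ncsubset d :=
  fun n x => forall B : ncsubset d, is_ncset B -> invariant B ->
     (forall m y, A m y -> B m y) -> B n x.

(* Hilbert spaces over C: a C-vector space with an inner product
   (linear in the first variable) complete for the induced norm. *)
Definition inner_product (H : lmodType C) (ip : H -> H -> C) : Prop :=
  [/\ forall (a : C) (x y z : H), ip (a *: x + y) z = a * ip x z + ip y z,
      forall x y, ip x y = (ip y x)^*,
      forall x, 0 <= ip x x &
      forall x, ip x x = 0 -> x = 0].

Definition hnorm (H : lmodType C) (ip : H -> H -> C) (x : H) : C := sqrtC (ip x x).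

Definition is_hilbert (H : lmodType C) (ip : H -> H -> C) : Prop :=
  inner_product ip /\
  forall u : nat -> H,
    (forall eps : C, 0 < eps -> exists N, forall p q, (N <= p)%N -> (N <= q)%N ->
        hnorm ip (u p - u q) < eps) ->
    exists l : H, forall eps : C, 0 < eps -> exists N, forall p, (N <= p)%N ->
        hnorm ip (u p - l) < eps.

(* C^n (x) H is modelled as H^n = 'I_n -> H with the direct-sum inner product. *)
Definition normsqn (H : lmodType C) (ip : H -> H -> C) n (v : 'I_n -> H) : C :=
  \sum_(i < n) ip (v i) (v i).

Definition bounded_op (H K : lmodType C) (ipH : H -> H -> C) (ipK : K -> K -> C)
  n (T : ('I_n -> H) -> ('I_n -> K)) : Prop :=
  (forall (a : C) (v w : 'I_n -> H),
      T (fun i => a *: v i + w i) = (fun i => a *: T v i + T w i)) /\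
  exists M : C, 0 <= M /\ forall v, normsqn ipK (T v) <= M * normsqn ipH v.

(* (A (x) I_V) acting on C^n (x) V *)
Definition mxact (V : lmodType C) n (A : 'M[C]_n) (v : 'I_n -> V) : 'I_n -> V :=
  fun i => \sum_(j < n) A i j *: v j.

(* T1 (+) T2 acting on C^(n+m) (x) H = (C^n (x) H) (+) (C^m (x) H) *)
Definition dsum_op (H K : lmodType C) n m (T1 : ('I_n -> H) -> ('I_n -> K))
  (T2 : ('I_m -> H) -> ('I_m -> K)) : ('I_(n + m) -> H) -> ('I_(n + m) -> K) :=
  fun v i => match split i with
             | inl a => T1 (fun j => v (lshift m j)) a
             | inr b => T2 (fun j => v (rshift n j)) b
             end.

(* the (total) type of candidate L(H,K)-valued functions on M^d; only their
   values on the domain matter *)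
Definition ncmap (H K : lmodType C) d :=
  forall n : nat, ncpt d n -> ('I_n -> H) -> ('I_n -> K).

Definition is_ncfun (H K : lmodType C) (ipH : H -> H -> C) (ipK : K -> K -> C)
  d (D : ncsubset d) (f : ncmap H K d) : Prop :=
  [/\ closed_dsum D,
      forall n (x : ncpt d n), D n x -> bounded_op ipH ipK (f n x),
      forall n m (x : ncpt d n) (y : ncpt d m), D n x -> D m y ->
        f (n + m)%N (dsum_pt x y) = dsum_op (f n x) (f m y) &
      forall n (s : 'M[C]_n) (x : ncpt d n), s \in unitmx -> D n x -> D n (simpt s x) ->
        f n (simpt s x) = (fun v => mxact (invmx s) (f n x (mxact s v)))].

End NC.

Arguments envelope {R d} A n x.

From Pilot Require Import Defs.
From mathcomp Require Import all_boot all_order all_algebra ring.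
From mathcomp Require Import complex reals.
From Stdlib Require Import ClassicalEpsilon FunctionalExtensionality PropExtensionality.
Set Implicit Arguments. Unset Strict Implicit. Unset Printing Implicit Defensive.
Import Order.TTheory GRing.Theory Num.Theory.
Local Open Scope ring_scope.

(* For [D] closed under direct sums, the envelope of [D] is its similarity orbit
   {s^-1 y s : y in D, s invertible}: the orbit contains [D], is invariant, and is closed
   under direct sums because block-diagonal similarities act blockwise. The similarity rule
   forces the extension [f~(s^-1 y s) = (s^-1 (x) I) f(y) (s (x) I)], and it is well defined
   because [f] itself respects the similarities between points of [D]. Conjugating a bounded
   operator by [s (x) I] keeps it bounded, by the parallelogram law. *)

Section Similarity.
Variable R : realType.
Local Notation C := (R[i]).

Lemma invmx_uniq n (X B : 'M[C]_n) : B \in unitmx -> X *m B = 1%:M -> invmx B = X.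
Proof. by move=> Bu XB; rewrite -[X](mulmxK Bu) XB mul1mx. Qed.

Lemma invmxM n (A B : 'M[C]_n) : A \in unitmx -> B \in unitmx ->
  invmx (A *m B) = invmx B *m invmx A.
Proof.
move=> Au Bu; apply: invmx_uniq; first by rewrite unitmx_mul Au Bu.
by rewrite mulmxA -(mulmxA (invmx B)) mulVmx // mulmx1 mulVmx.
Qed.

Lemma unitary_invmx n (U : 'M[C]_n) : unitary U -> U \in unitmx /\ invmx U = adjmx U.
Proof. by move=> [_ UU]; have [_ Uu] := mulmx1_unit UU; split; last exact: invmx_uniq. Qed.

Lemma simpt1 d n (x : ncpt R d n) : simpt 1%:M x = x.
Proof. by apply: functional_extensionality => k; rewrite /simpt invmx1 mul1mx mulmx1. Qed.

Lemma simptM d n (s t : 'M[C]_n) (x : ncpt R d n) : s \in unitmx -> t \in unitmx ->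
  simpt s (simpt t x) = simpt (t *m s) x.
Proof.
by move=> su tu; apply: functional_extensionality => k; rewrite /simpt invmxM // !mulmxA.
Qed.

Lemma simptK d n (s : 'M[C]_n) (x : ncpt R d n) : s \in unitmx ->
  simpt (invmx s) (simpt s x) = x.
Proof. by move=> su; rewrite simptM ?unitmx_inv // mulmxV // simpt1. Qed.

Lemma dsum_simpt d n m (s : 'M[C]_n) (t : 'M[C]_m) (x : ncpt R d n) (y : ncpt R d m) :
  s \in unitmx -> t \in unitmx ->
  dsum_pt (simpt s x) (simpt t y) = simpt (block_mx s 0 0 t) (dsum_pt x y).
Proof.
move=> su tu; apply: functional_extensionality => k.
rewrite /simpt /dsum_pt invmx_block_diag ?block_diag_mx_unit ?su //.
by rewrite !mulmx_block !(mulmx0, mul0mx, addr0, add0r).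
Qed.

End Similarity.

Section MatrixAction.
Variable R : realType.
Local Notation C := (R[i]).
Implicit Types V W : lmodType C.

Lemma mxact1 V n (v : 'I_n -> V) : mxact 1%:M v = v.
Proof.
apply: functional_extensionality => i; rewrite /mxact (bigD1 i) //= big1 ?addr0.
  by rewrite mxE eqxx scale1r.
by move=> j /negbTE ji; rewrite mxE eq_sym ji scale0r.
Qed.

Lemma mxactM V n (A B : 'M[C]_n) (v : 'I_n -> V) :
  mxact A (mxact B v) = mxact (A *m B) v.
Proof.
apply: functional_extensionality => i; rewrite /mxact.
under eq_bigr => j _ do rewrite scaler_sumr.
rewrite exchange_big /=; apply: eq_bigr => k _.
by rewrite !mxE scaler_suml; apply: eq_bigr => j _; rewrite scalerA.
Qed.

Lemma mxact_linear V n (A : 'M[C]_n) a (v w : 'I_n -> V) :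
  mxact A (fun i => a *: v i + w i) = (fun i => a *: mxact A v i + mxact A w i).
Proof.
apply: functional_extensionality => i; rewrite /mxact scaler_sumr -big_split /=.
by apply: eq_bigr => j _; rewrite scalerDr !scalerA mulrC.
Qed.

Lemma split_lshift n m (j : 'I_n) : split (lshift m j) = inl j.
Proof. exact: (unsplitK (inl j)). Qed.

Lemma split_rshift n m (j : 'I_m) : split (rshift n j) = inr j.
Proof. exact: (unsplitK (inr j)). Qed.

Section DirectSum.
Variables (V W : lmodType C) (n m : nat).
Variables (T1 : ('I_n -> V) -> ('I_n -> W)) (T2 : ('I_m -> V) -> ('I_m -> W)).

Lemma dsum_op_lshift v : (fun j => dsum_op T1 T2 v (lshift m j)) = T1 (fun j => v (lshift m j)).
Proof. by apply: functional_extensionality => j; rewrite /dsum_op split_lshift. Qed.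

Lemma dsum_op_rshift v : (fun j => dsum_op T1 T2 v (rshift n j)) = T2 (fun j => v (rshift n j)).
Proof. by apply: functional_extensionality => j; rewrite /dsum_op split_rshift. Qed.

Lemma dsum_op_comp (U : lmodType C) (S1 : ('I_n -> W) -> ('I_n -> U))
    (S2 : ('I_m -> W) -> ('I_m -> U)) v :
  dsum_op S1 S2 (dsum_op T1 T2 v) = dsum_op (fun w => S1 (T1 w)) (fun w => S2 (T2 w)) v.
Proof. by rewrite {1}/dsum_op dsum_op_lshift dsum_op_rshift. Qed.

End DirectSum.

Lemma mxact_block_diag V n m (A : 'M[C]_n) (B : 'M[C]_m) :
  mxact (V := V) (block_mx A 0 0 B) = dsum_op (mxact A) (mxact B).
Proof.
apply: functional_extensionality => v; apply: functional_extensionality => i.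
rewrite /mxact /dsum_op big_split_ord /=.
have := splitK i; case: (split i) => a /= <-.
  rewrite [X in _ + X]big1 ?addr0; last by move=> j _; rewrite block_mxEur mxE scale0r.
  by apply: eq_bigr => j _; rewrite block_mxEul.
rewrite [X in X + _]big1 ?add0r; last by move=> j _; rewrite block_mxEdl mxE scale0r.
by apply: eq_bigr => j _; rewrite block_mxEdr.
Qed.

(* [(s^-1 (x) I) T (s (x) I)], the right-hand side of the similarity rule of [is_ncfun]. *)
Definition conjop V W n (s : 'M[C]_n) (T : ('I_n -> V) -> ('I_n -> W)) :=
  fun v => mxact (invmx s) (T (mxact s v)).

Lemma conjop1 V W n (T : ('I_n -> V) -> ('I_n -> W)) : conjop 1%:M T = T.
Proof. by apply: functional_extensionality => v; rewrite /conjop invmx1 !mxact1. Qed.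

Lemma conjopM V W n (s t : 'M[C]_n) (T : ('I_n -> V) -> ('I_n -> W)) :
  s \in unitmx -> t \in unitmx -> conjop s (conjop t T) = conjop (t *m s) T.
Proof.
by move=> su tu; apply: functional_extensionality => v; rewrite /conjop !mxactM invmxM.
Qed.

Lemma conjop_block_diag V W n m (s : 'M[C]_n) (t : 'M[C]_m)
    (T1 : ('I_n -> V) -> ('I_n -> W)) (T2 : ('I_m -> V) -> ('I_m -> W)) :
  s \in unitmx -> t \in unitmx ->
  conjop (block_mx s 0 0 t) (dsum_op T1 T2) = dsum_op (conjop s T1) (conjop t T2).
Proof.
move=> su tu; apply: functional_extensionality => v.
rewrite /conjop invmx_block_diag ?block_diag_mx_unit ?su //.
by rewrite !mxact_block_diag !dsum_op_comp.
Qed.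

End MatrixAction.

Section InnerProduct.
Local Open Scope complex_scope.
Variable R : realType.
Local Notation C := (R[i]).
Variables (V : lmodType C) (ip : V -> V -> C).
Hypothesis ipP : inner_product ip.

Let ip_linear (a : C) (x y z : V) : ip (a *: x + y) z = a * ip x z + ip y z.
Proof. by case: ipP. Qed.
Let ip_conj x y : ip x y = (ip y x)^*.
Proof. by case: ipP. Qed.
Let ip_ge0 x : 0 <= ip x x.
Proof. by case: ipP. Qed.

Lemma ip0l z : ip 0 z = 0.
Proof.
have := ip_linear 1 0 0 z; rewrite scaler0 addr0 mul1r.
by move/(congr1 (fun t => t - ip 0 z)); rewrite subrr addrK.
Qed.

Lemma ipDl x y z : ip (x + y) z = ip x z + ip y z.
Proof. by rewrite -[x]scale1r ip_linear mul1r scale1r. Qed.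

Lemma ipZl a x z : ip (a *: x) z = a * ip x z.
Proof. by rewrite -[a *: x]addr0 ip_linear ip0l addr0. Qed.

Lemma ipNl x z : ip (- x) z = - ip x z.
Proof. by rewrite -scaleN1r ipZl mulN1r. Qed.

Lemma ipDr x y z : ip z (x + y) = ip z x + ip z y.
Proof. by rewrite ip_conj ipDl rmorphD (ip_conj z x) (ip_conj z y). Qed.

Lemma ipZr a x z : ip z (a *: x) = a^* * ip z x.
Proof. by rewrite ip_conj ipZl rmorphM (ip_conj z x). Qed.

Lemma ipNr x z : ip z (- x) = - ip z x.
Proof. by rewrite ip_conj ipNl rmorphN (ip_conj z x). Qed.

(* Parallelogram law, dropping the nonnegative term [ip (u - v) (u - v)]. *)
Lemma ip_normD_le u v : ip (u + v) (u + v) <= 2%:R * (ip u u + ip v v).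
Proof.
have <- : ip (u + v) (u + v) + ip (u - v) (u - v) = 2%:R * (ip u u + ip v v).
  by rewrite !ipDl !ipDr !ipNl !ipNr; ring.
by rewrite lerDl.
Qed.

Lemma ip_norm_sum_le k (u : 'I_k -> V) :
  ip (\sum_(j < k) u j) (\sum_(j < k) u j) <= 2%:R ^+ k * \sum_(j < k) ip (u j) (u j).
Proof.
elim: k u => [|k IHk] u; first by rewrite !big_ord0 ip0l expr0 mul1r.
rewrite !big_ord_recl; apply: (le_trans (ip_normD_le _ _)).
rewrite exprS -mulrA ler_wpM2l ?ler0n // mulrDr lerD ?IHk //.
by rewrite ler_peMl // exprn_ege1 // ler1n.
Qed.

Lemma normsqn_mxact_le n (A : 'M[C]_n) : exists c : C, 0 <= c /\
  forall w : 'I_n -> V, normsqn ip (mxact A w) <= c * normsqn ip w.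
Proof.
set B := \sum_(p : 'I_n * 'I_n) A p.1 p.2 * (A p.1 p.2)^*.
have B_ge0 : 0 <= B by apply: sumr_ge0 => p _; apply: mulcJ_ge0.
have le_B i j : A i j * (A i j)^* <= B.
  by rewrite /B (bigD1 (i, j)) //= lerDl sumr_ge0 // => p _; apply: mulcJ_ge0.
have pow2_ge0 : (0 : C) <= 2%:R ^+ n by rewrite exprn_ge0 ?ler0n.
exists (n%:R * (2%:R ^+ n * B)); split; first by rewrite !mulr_ge0 ?ler0n.
move=> w; rewrite /normsqn /mxact.
apply: (le_trans (ler_sum _ (fun i _ => ip_norm_sum_le (fun j => A i j *: w j)))).
have -> : n%:R * (2%:R ^+ n * B) * \sum_(i < n) ip (w i) (w i) =
    \sum_(i < n) 2%:R ^+ n * \sum_(j < n) B * ip (w j) (w j).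
  by rewrite sumr_const card_ord -mulr_natl -mulr_sumr; ring.
apply: ler_sum => i _; rewrite ler_wpM2l // ler_sum // => j _.
by rewrite ipZl ipZr mulrA ler_wpM2r.
Qed.

End InnerProduct.

Lemma bounded_conjop (R : realType) (H K : lmodType R[i])
    (ipH : H -> H -> R[i]) (ipK : K -> K -> R[i]) n (s : 'M[R[i]]_n) T :
  inner_product ipH -> inner_product ipK ->
  bounded_op ipH ipK T -> bounded_op ipH ipK (conjop s T).
Proof.
move=> ipHP ipKP [T_lin [M [M_ge0 T_le]]]; split.
  by move=> a v w; rewrite /conjop mxact_linear T_lin mxact_linear.
have [c1 [c1_ge0 le_c1]] := normsqn_mxact_le ipKP (invmx s).
have [c2 [c2_ge0 le_c2]] := normsqn_mxact_le ipHP s.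
exists (c1 * (M * c2)); split; first by rewrite !mulr_ge0.
move=> v; apply: (le_trans (le_c1 _)); rewrite -mulrA ler_wpM2l //.
by apply: (le_trans (T_le _)); rewrite -mulrA ler_wpM2l.
Qed.

Section Envelope.
Local Unset Implicit Arguments.
Variable R : realType.
Local Notation C := (R[i]).
Variables (d : nat) (D : ncsubset R d).

Definition simorbit : ncsubset R d := fun n x =>
  exists (s : 'M[C]_n) (y : ncpt R d n), [/\ s \in unitmx, D n y & x = simpt s y].

Lemma simorbit_refl n (x : ncpt R d n) : D n x -> simorbit n x.
Proof. by move=> Dx; exists 1%:M, x; rewrite unitmx1 simpt1. Qed.

(* [Defs.] because [eqtype.invariant] shadows it. *)
Lemma simorbit_invariant : Defs.invariant simorbit.
Proof.
move=> n S _ Su [s [y [su Dy ->]]].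
by exists (s *m S), y; rewrite unitmx_mul su Su simptM.
Qed.

Lemma simorbit_closed_dsum : closed_dsum D -> closed_dsum simorbit.
Proof.
move=> Dsum n m _ _ [s [x [su Dx ->]]] [t [y [tu Dy ->]]].
exists (block_mx s 0 0 t), (dsum_pt x y).
by split; [rewrite block_diag_mx_unit su | exact: Dsum | exact: dsum_simpt].
Qed.

Lemma simorbit_ncset : closed_dsum D -> is_ncset simorbit.
Proof.
move=> Dsum; split; first exact: simorbit_closed_dsum.
move=> n U x /unitary_invmx [Uu UadjU] /(simorbit_invariant _ _ _ Uu).
by rewrite /simpt UadjU.
Qed.

Lemma envelope_simorbit : closed_dsum D -> envelope D = simorbit.
Proof.
move=> Dsum; apply: functional_extensionality_dep => n.
apply: functional_extensionality => x; apply: propositional_extensionality; split.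
  by apply; [exact: simorbit_ncset | exact: simorbit_invariant | exact: simorbit_refl].
by move=> [s [y [su Dy ->]]] B _ Binv DB; apply: Binv => //; apply: DB.
Qed.

Variables (H K : lmodType C) (ipH : H -> H -> C) (ipK : K -> K -> C).
Variable f : ncmap H K d.
Hypothesis f_ncfun : is_ncfun ipH ipK D f.

Lemma ncfun_conjop_eq n (s t : 'M[C]_n) (x y : ncpt R d n) :
  s \in unitmx -> t \in unitmx -> D n x -> D n y -> simpt s x = simpt t y ->
  conjop s (f n x) = conjop t (f n y).
Proof.
move=> su tu Dx Dy sx_ty.
have stu : s *m invmx t \in unitmx by rewrite unitmx_mul su unitmx_inv.
have y_sim : y = simpt (s *m invmx t) x by rewrite -simptM ?unitmx_inv // sx_ty simptK.
case: f_ncfun => _ _ _ f_sim.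
rewrite [in RHS]y_sim f_sim -?y_sim //.
by rewrite -[X in _ = conjop t X]/(conjop _ (f n x)) conjopM // mulmxKV.
Qed.

Definition orbit_witness n (x : ncpt R d n) (p : 'M[C]_n * ncpt R d n) : Prop :=
  [/\ p.1 \in unitmx, D n p.2 & x = simpt p.1 p.2].

(* Off [simorbit] the chosen witness is junk; on it, [ncfun_conjop_eq] makes the choice irrelevant. *)
Definition ncext : ncmap H K d := fun n x =>
  let p := epsilon (inhabits (1%:M, x)) (orbit_witness n x) in conjop p.1 (f n p.2).

Lemma ncextE {n s y x} : s \in unitmx -> D n y -> x = simpt s y ->
  ncext n x = conjop s (f n y).
Proof.
move=> su Dy xE; rewrite /ncext.
have [|pu pD px] := epsilon_spec (inhabits (1%:M, x)) (orbit_witness n x).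
  by exists (s, y).
by apply: ncfun_conjop_eq => //; rewrite -px.
Qed.

Lemma ncext_restrict n (x : ncpt R d n) : D n x -> ncext n x = f n x.
Proof. by move=> Dx; rewrite (ncextE (unitmx1 _ _) Dx (esym (simpt1 x))) conjop1. Qed.

Lemma ncext_ncfun : inner_product ipH -> inner_product ipK ->
  is_ncfun ipH ipK simorbit ncext.
Proof.
move=> ipHP ipKP; case: f_ncfun => Dsum f_bdd f_dsum _; split.
- exact: simorbit_closed_dsum.
- move=> n x [s [y [su Dy xE]]].
  by rewrite (ncextE su Dy xE); apply: bounded_conjop => //; exact: f_bdd.
- move=> n m x y [s [x' [su Dx' xE]]] [t [y' [tu Dy' yE]]].
  have stu : block_mx s 0 0 t \in unitmx by rewrite block_diag_mx_unit su.
  rewrite (ncextE stu (Dsum _ _ _ _ Dx' Dy')); last by rewrite xE yE dsum_simpt.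
  by rewrite (ncextE su Dx' xE) (ncextE tu Dy' yE) f_dsum // conjop_block_diag.
- move=> n s x su [t [y [tu Dy xE]]] _.
  have tsu : t *m s \in unitmx by rewrite unitmx_mul tu.
  rewrite (ncextE tu Dy xE) (ncextE (x := simpt s x) tsu Dy) ?xE ?simptM //.
  by rewrite -[RHS]/(conjop s (conjop t (f n y))) conjopM.
Qed.

Lemma ncext_unique (g : ncmap H K d) :
  is_ncfun ipH ipK simorbit g -> (forall n (x : ncpt R d n), D n x -> g n x = f n x) ->
  forall n (x : ncpt R d n), simorbit n x -> g n x = ncext n x.
Proof.
move=> [_ _ _ g_sim] g_f n x xorb; have [s [y [su Dy xE]]] := xorb.
rewrite (ncextE su Dy xE) -(g_f _ _ Dy) xE g_sim //; first exact: simorbit_refl.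
by rewrite -xE.
Qed.

End Envelope.

Arguments ncext {R d} D {H K} f n x.
Arguments ncext_ncfun {R d D H K ipH ipK f}.
Arguments ncext_restrict {R d D H K ipH ipK f}.
Arguments ncext_unique {R d D H K ipH ipK f}.

Theorem proposition3p11 (R : realType)
  (H : lmodType R[i]) (ipH : H -> H -> R[i]) (K : lmodType R[i]) (ipK : K -> K -> R[i])
  (hH : is_hilbert ipH) (hK : is_hilbert ipK)
  (d : nat) (D : ncsubset R d) (f : ncmap H K d) :
  is_ncdomain D -> is_ncfun ipH ipK D f ->
  exists g : ncmap H K d,
    [/\ is_ncfun ipH ipK (envelope D) g,
        (forall n (x : ncpt R d n), D n x -> g n x = f n x) &
        forall g' : ncmap H K d,
          is_ncfun ipH ipK (envelope D) g' ->
          (forall n (x : ncpt R d n), D n x -> g' n x = f n x) ->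
          forall n (x : ncpt R d n), envelope D n x -> g' n x = g n x].
Proof.
move=> [[Dsum _] _] f_ncfun; rewrite envelope_simorbit //.
exists (ncext D f); split.
- exact: ncext_ncfun f_ncfun hH.1 hK.1.
- exact: ncext_restrict f_ncfun.
- exact: ncext_unique f_ncfun.
Qed.
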